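(* Let $0<r_j<\infty$ and $0<s_j<\infty$ for $j=1,\dots,n$, let $\rho=\otimes_{j=1}^n\gamma(r_j)$ and $\sigma=\otimes_{j=1}^n\gamma(s_j)$. Let $\alpha>1$ and let $V_{\sigma(\alpha-1)}$ and $V_{\rho(\alpha)}$ denote the covariance matrices of the gaussian states $\sigma^{\alpha-1}/\operatorname{tr}\sigma^{\alpha-1}$ and $\rho^\alpha/\operatorname{tr}\rho^\alpha$ respectively. Then $$V_{\sigma(\alpha-1)}>V_{\rho(\alpha)}\iff\alpha<\min\left\{\frac{s_j}{s_j-r_j}: j\in\{1,\dots,n\}\text{ such that } r_j<s_j\right\},$$ where the minimum of the empty set is $+\infty$.
   Context: One-mode Fock space: $\ell^2(\mathbb{Z}_{\ge 0})$ with orthonormal particle basis $\{|k\rangle\}$; $n$-mode space is the $n$-fold tensor product. For $0<s<\infty$, $\gamma(s)=(1-e^{-s})\sum_{k\ge0}e^{-ks}|k\rangle\langle k|$. For $\beta>0$, $\gamma(\mathbf{s})^\beta/\operatorname{tr}\gamma(\mathbf{s})^\beta=\otimes_j\gamma(\beta s_j)$, and the covariance matrix of the gaussian state $\otimes_j\gamma(t_j)$ is the $2n\times 2n$ matrix $\frac12\operatorname{diag}(\coth\frac{t_1}{2},\dots,\coth\frac{t_n}{2})\otimes I_2$. For real symmetric matrices, $A>B$ means $A-B$ is positive definite. *)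

From HB Require Import structures.
From mathcomp Require Import all_boot all_order all_algebra.
From mathcomp Require Import mxtens.
From mathcomp Require Import all_classical all_reals all_analysis.
Set Implicit Arguments. Unset Strict Implicit. Unset Printing Implicit Defensive.
Import Order.TTheory GRing.Theory Num.Theory.
Local Open Scope ring_scope.

Definition coth {R : realType} (x : R) : R :=
  (expR x + expR (- x)) / (expR x - expR (- x)).

(* Covariance matrix of the n-mode gaussian state (x)_j gamma(t_j), as given
   in the context: (1/2) diag(coth(t_1/2),...,coth(t_n/2)) (x) I_2. *)
Definition gauss_cov {R : realType} (n : nat) (t : 'I_n -> R) : 'M[R]_(n * 2) :=
  (2^-1) *: (diag_mx (\row_(j < n) coth (t j / 2)) *t (1%:M : 'M[R]_2)).

Definition posdef {R : realType} (m : nat) (A : 'M[R]_m) : Prop :=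
  forall v : 'cV[R]_m, v != 0 -> 0 < (v^T *m A *m v) ord0 ord0.

Definition mx_gt {R : realType} (m : nat) (A B : 'M[R]_m) : Prop :=
  posdef (A - B).

(* Covariance matrix of sigma^beta / tr sigma^beta for sigma = (x)_j gamma(s_j):
   this state equals (x)_j gamma(beta s_j). *)
Definition cov_power {R : realType} (n : nat) (s : 'I_n -> R) (beta : R) : 'M[R]_(n * 2) :=
  gauss_cov (fun j => beta * s j).

From HB Require Import structures.
From mathcomp Require Import all_boot all_order all_algebra.
From mathcomp Require Import mxtens.
From mathcomp Require Import all_classical all_reals all_analysis.
From mathcomp Require Import ring lra.
Import Order.TTheory GRing.Theory Num.Theory.
Local Open Scope ring_scope.

(* Both covariance matrices are diagonal, with entries coth(t_j/2)/2 where
   t_j = (alpha-1) s_j resp. alpha r_j.  Since coth = 1 + 2/(e^{2x}-1) is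
   strictly decreasing on (0,+oo), the difference is positive definite iff
   (alpha-1) s_j < alpha r_j for every j, i.e. alpha (s_j - r_j) < s_j; this
   holds automatically when s_j <= r_j and means alpha < s_j/(s_j - r_j)
   otherwise. *)

Section CothCovariance.
Variable R : realType.

Lemma cothE (x : R) : x != 0 -> coth x = 1 + 2 / (expR (2 * x) - 1).
Proof.
move=> x0; have ex1 : expR x ^+ 2 - 1 != 0.
  rewrite subr_eq0 -expRM_natl; apply: contra x0 => /eqP e.
  have h : 2 * x = 0 by apply: expR_inj; rewrite e expR0.
  by apply/eqP; lra.
rewrite /coth expRN expRM_natl; field.
by rewrite ex1 expR_eq0.
Qed.

Lemma ltr_coth (x y : R) : 0 < x -> 0 < y -> (coth y < coth x) = (x < y).
Proof.
move=> x0 y0; have e1 (z : R) : 0 < z -> 0 < expR (2 * z) - 1.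
  by move=> z0; rewrite subr_gt0 expR_gt1 mulr_gt0.
rewrite !cothE ?gt_eqF // ltrD2l ltr_pM2l // ltf_pV2 ?posrE ?e1 //.
by rewrite ltrD2r ltr_expR ltr_pM2l.
Qed.

Lemma quad_form_diag_mx m (d : 'rV[R]_m) (v : 'cV[R]_m) :
  (v^T *m diag_mx d *m v) 0 0 = \sum_k d 0 k * v k 0 ^+ 2.
Proof. by rewrite mul_mx_diag mxE; apply: eq_bigr => k _; rewrite !mxE; ring. Qed.

Lemma posdef_diag_mx m (d : 'rV[R]_m) : posdef (diag_mx d) <-> forall k, 0 < d 0 k.
Proof.
split=> [dpos k | dpos v v0].
  move: (dpos (delta_mx k 0)).
  rewrite quad_form_diag_mx (bigD1 k) //= big1 => [|i /negPf ik]; last first.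
    by rewrite !mxE ik expr0n mulr0.
  rewrite !mxE !eqxx expr1n mulr1 addr0; apply.
  apply: contraNneq (@oner_neq0 R) => /matrixP /(_ k 0).
  by rewrite !mxE !eqxx => /eqP.
case: (pickP (fun k => v k 0 != 0)) => [k vk | v_eq0]; last first.
  by case/eqP: v0; apply/matrixP => i j; rewrite ord1 mxE; apply/eqP/negbFE/v_eq0.
rewrite quad_form_diag_mx (bigD1 k) //= ltr_pwDl //.
  by rewrite mulr_gt0 // exprn_even_gt0.
by apply: sumr_ge0 => i _; rewrite mulr_ge0 ?sqr_ge0 // ltW.
Qed.

Lemma gauss_covE n (t : 'I_n -> R) :
  gauss_cov t = diag_mx (\row_k (2^-1 * coth (t (mxtens_unindex k).1 / 2))).
Proof.
apply/matrixP => i j.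
case: (mxtens_indexP i) => i1 i2; case: (mxtens_indexP j) => j1 j2.
rewrite /gauss_cov !mxE !mxtens_indexK /=.
rewrite (inj_eq (can_inj (@mxtens_indexK _ _))) xpair_eqE.
by case: (i1 == j1); case: (i2 == j2); rewrite /= ?mulr1 ?mulr0 ?mulr1n ?mulr0n.
Qed.

Lemma mx_gt_gauss_cov n (t u : 'I_n -> R) :
  (forall j, 0 < t j) -> (forall j, 0 < u j) ->
  mx_gt (gauss_cov t) (gauss_cov u) <-> forall j, t j < u j.
Proof.
move=> tpos upos; rewrite /mx_gt !gauss_covE -linearB posdef_diag_mx.
have coth_gap j : (0 < 2^-1 * coth (t j / 2) - 2^-1 * coth (u j / 2)) = (t j < u j).
  by rewrite -mulrBr pmulr_rgt0 ?invr_gt0 // subr_gt0 ltr_coth ?divr_gt0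
    ?ltr_pM2r ?invr_gt0.
split=> lt_tu k; last by rewrite !mxE coth_gap.
by have := lt_tu (mxtens_index (k, ord0)); rewrite !mxE coth_gap mxtens_indexK.
Qed.

Lemma bigmin_fin_gtP (I : finType) (P : pred I) (f : I -> R) (a : R) :
  (a%:E < \big[Order.min/+oo%E]_(i | P i) (f i)%:E)%O <-> forall i, P i -> a < f i.
Proof.
split=> [/bigmin_gtP [_ lt_af] i Pi | lt_af]; first by rewrite -lte_fin lt_af.
by apply/bigmin_gtP; split=> [|i Pi]; rewrite ?ltry ?lte_fin ?lt_af.
Qed.

Lemma mul_subr1_ltP (a r s : R) : 0 <= a -> 0 < s ->
  (a - 1) * s < a * r <-> (r < s -> a < s / (s - r)).
Proof.
move=> a_ge0 s_gt0; have -> : ((a - 1) * s < a * r) = (a * (s - r) < s).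
  by rewrite mulrBl mulrBr mul1r ltrBlDr addrC -ltrBlDr.
split=> [lt_as rs | lt_as]; first by rewrite ltr_pdivlMr ?subr_gt0.
have [rs | sr] := ltP r s; first by rewrite -ltr_pdivlMr ?subr_gt0 ?lt_as.
by apply: le_lt_trans s_gt0; rewrite mulr_ge0_le0 ?subr_le0.
Qed.

End CothCovariance.

Theorem lemma3p5 (R : realType) (n : nat) (r s : 'I_n -> R)
  (hr : forall j, 0 < r j) (hs : forall j, 0 < s j) (alpha : R) (halpha : 1 < alpha) :
  mx_gt (cov_power s (alpha - 1)) (cov_power r alpha) <->
  (alpha%:E < \big[Order.min/+oo%E]_(j < n | r j < s j) (s j / (s j - r j))%:E)%O.
Proof.
have alpha_gt0 : 0 < alpha by apply: lt_trans halpha.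
rewrite /cov_power bigmin_fin_gtP mx_gt_gauss_cov => [|j|j];
  try by rewrite mulr_gt0 ?subr_gt0.
have step j := @mul_subr1_ltP R alpha (r j) _ (ltW alpha_gt0) (hs j).
by split=> lt_rs j; apply/(step j); apply: lt_rs.
Qed.
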